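(* Let $\mathbf S=\operatorname{diag}(\lambda_i)_{i=1}^d$, $\mathbf M=\operatorname{diag}(m_i)_{i=1}^d$ with $\lambda_i,m_i>0$, $\mathbf R=\operatorname{diag}(r_i)_{i=1}^d$ with $r_i\ge0$, $\sigma>0$, $n\ge1$, and set $\mathbf R'=\mathbf M^{-1/2}\mathbf R\mathbf M^{-1/2}$, $\mathbf S'=\mathbf M^{-1/2}\mathbf S\mathbf M^{-1/2}$. For $\tau\ge0$ let $\mathbb K_\tau=\{k\in[d]:r_k/m_k>\tau^2\}$. Then $$\inf_{\mathbf A\in\mathbb R^{d\times d}}\frac1{\pi^2}\|(\mathbf I-\mathbf A)^\top\mathbf R'(\mathbf I-\mathbf A)\|+\frac{\sigma^2}{n}\langle\mathbf R',\mathbf A(\mathbf S')^{-1}\mathbf A^\top\rangle=\inf_{\tau\ge0}\Big[\frac{\tau^2}{\pi^2}+\sum_{i\in\mathbb K_\tau}\Big(1-\tau\sqrt{\tfrac{m_i}{r_i}}\Big)^2\frac{\sigma^2r_i}{n\lambda_i}\Big]\ \ge\ \frac14\inf_{\tau\ge0}\Big[\frac{\tau^2}{\pi^2}+\sum_{i\in\mathbb K_\tau}\frac{\sigma^2r_i}{n\lambda_i}\Big].$$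
   Context: $\|\cdot\|$ is the spectral norm and $\langle\mathbf A,\mathbf B\rangle=\operatorname{tr}(\mathbf A^\top\mathbf B)$; $[d]=\{1,\dots,d\}$. *)

From HB Require Import structures.
From mathcomp Require Import all_boot all_order all_algebra.
From mathcomp Require Import all_classical all_reals all_analysis.
Set Implicit Arguments. Unset Strict Implicit. Unset Printing Implicit Defensive.
Import Order.TTheory GRing.Theory Num.Theory.
Local Open Scope classical_set_scope.
Local Open Scope ring_scope.

Definition vnorm (R : realType) (d : nat) (x : 'cV[R]_d) : R :=
  Num.sqrt (\sum_(i < d) x i 0 ^+ 2).

Definition spec_norm (R : realType) (d : nat) (B : 'M[R]_d) : R :=
  sup [set vnorm (B *m x) | x in [set x : 'cV[R]_d | vnorm x <= 1]].

Definition frob_inner (R : realType) (d : nat) (A B : 'M[R]_d) : R :=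
  \tr (A^T *m B).

Definition diagf (R : realType) (d : nat) (v : 'I_d -> R) : 'M[R]_d :=
  diag_mx (\row_i v i).

From HB Require Import structures.
From mathcomp Require Import all_boot all_order all_algebra.
From mathcomp Require Import all_classical all_reals all_analysis.
From mathcomp Require Import ring lra.
Import Order.TTheory GRing.Theory Num.Theory.
Local Open Scope classical_set_scope.
Local Open Scope ring_scope.

Set Implicit Arguments. Unset Strict Implicit. Unset Printing Implicit Defensive.

(* With rho_i = r_i / m_i and s_i = m_i / lambda_i, both R' and S'^-1 are diagonal.
   For any A put tau^2 = ||(I - A)^T R' (I - A)||: the diagonal entries give
   rho_i (1 - A_ii)^2 <= tau^2 and the trace term dominates sum_i rho_i s_i A_ii^2,
   so A_ii >= 1 - tau / sqrt rho_i >= 0 whenever rho_i > tau^2; this is the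
   tau-objective, and the diagonal shrinkage A_ii = (1 - tau / sqrt rho_i)_+
   attains it.  The factor 1/4 comes from comparing tau with 2 tau: when
   rho_i > 4 tau^2 the shrinkage factor (1 - tau / sqrt rho_i)^2 is at least 1/4. *)

Lemma ler_sum_term (R : numDomainType) (I : finType) (F : I -> R) j :
  (forall i, 0 <= F i) -> F j <= \sum_i F i.
Proof. by move=> F_ge0; rewrite (bigD1 j) //= lerDl sumr_ge0. Qed.

Lemma ler_sum_sub (R : numDomainType) (I : finType) (P Q : pred I) (F G : I -> R) :
  (forall i, Q i -> P i /\ G i <= F i) -> (forall i, P i -> 0 <= F i) ->
  \sum_(i | Q i) G i <= \sum_(i | P i) F i.
Proof.
move=> QP F_ge0; rewrite [leLHS]big_mkcond [leRHS]big_mkcond; apply: ler_sum => i _.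
case Qi: (Q i); first by have [-> ->] := QP i Qi.
by case Pi: (P i) => //; exact: F_ge0.
Qed.

Lemma ler_inf_image (R : realType) (T U : Type) (A : set T) (B : set U)
    (f : T -> R) (g : U -> R) (a : R) :
  0 <= a -> has_lbound (g @` B) -> f @` A !=set0 ->
  (forall x, A x -> exists2 y, B y & a * g y <= f x) ->
  a * inf (g @` B) <= inf (f @` A).
Proof.
move=> a_ge0 gB_lb fA_ne fg; apply: lb_le_inf => // _ [x Ax <-].
have [y By gyfx] := fg x Ax; apply: le_trans gyfx; apply: ler_wpM2l => //.
by apply: ge_inf => //; exists y.
Qed.

Section SpectralNorm.
Variables (R : realType) (d : nat).
Implicit Types (x : 'cV[R]_d) (B : 'M[R]_d).

Lemma vnorm0 : vnorm (0 : 'cV[R]_d) = 0.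
Proof. by rewrite /vnorm big1 ?sqrtr0 // => i _; rewrite mxE expr0n. Qed.

Lemma vnorm_delta j : vnorm (delta_mx j 0 : 'cV[R]_d) = 1.
Proof.
rewrite /vnorm (bigD1 j) //= big1 ?addr0 ?mxE ?eqxx ?expr1n ?sqrtr1 //.
by move=> i /negbTE ij; rewrite mxE ij expr0n.
Qed.

Lemma normr_coord_le_vnorm x j : `|x j 0| <= vnorm x.
Proof.
rewrite /vnorm -sqrtr_sqr ler_sqrt; last by apply: sumr_ge0 => i _; exact: sqr_ge0.
by apply: ler_sum_term => i; exact: sqr_ge0.
Qed.

Lemma vnorm_le_sum x : vnorm x <= \sum_i `|x i 0|.
Proof.
have sum_ge0 : 0 <= \sum_i `|x i 0| by apply: sumr_ge0.
rewrite /vnorm -(ger0_norm sum_ge0) -sqrtr_sqr ler_sqrt ?sqr_ge0 //.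
rewrite expr2 mulr_sumr; apply: ler_sum => i _.
rewrite -[leLHS]ger0_norm ?sqr_ge0 // normrX expr2 ler_wpM2r //.
exact: ler_sum_term.
Qed.

Lemma spec_norm_set_ub B :
  has_ubound [set vnorm (B *m x) | x in [set x | vnorm x <= 1]].
Proof.
exists (\sum_i \sum_j `|B i j|) => _ [x x_le1 <-].
apply: le_trans (vnorm_le_sum _) _; apply: ler_sum => i _.
rewrite mxE; apply: le_trans (ler_norm_sum _ _ _) _; apply: ler_sum => j _.
rewrite normrM -[leRHS]mulr1 ler_wpM2l //.
exact: le_trans (normr_coord_le_vnorm x j) x_le1.
Qed.

Lemma vnorm_mul_le_spec_norm B x : vnorm x <= 1 -> vnorm (B *m x) <= spec_norm B.
Proof. by move=> x_le1; apply: (ub_le_sup (spec_norm_set_ub B)); exists x. Qed.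

Lemma spec_norm_le B K :
  (forall x, vnorm x <= 1 -> vnorm (B *m x) <= K) -> spec_norm B <= K.
Proof.
move=> BK; apply: ge_sup => [|_ [x x_le1 <-]]; last exact: BK.
by exists (vnorm (B *m 0)), 0 => //=; rewrite vnorm0.
Qed.

Lemma spec_norm_ge0 B : 0 <= spec_norm B.
Proof.
by apply: le_trans (vnorm_mul_le_spec_norm B (x := 0) _); rewrite ?mulmx0 vnorm0.
Qed.

Lemma normr_entry_le_spec_norm B i j : `|B i j| <= spec_norm B.
Proof.
apply: le_trans (vnorm_mul_le_spec_norm B (x := delta_mx j 0) _); last first.
  by rewrite vnorm_delta.
by apply: le_trans (normr_coord_le_vnorm _ i); rewrite -colE mxE.
Qed.

Lemma spec_norm_diagf_le (b : 'I_d -> R) K :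
  0 <= K -> (forall i, `|b i| <= K) -> spec_norm (diagf b) <= K.
Proof.
move=> K_ge0 bK; apply: spec_norm_le => x x_le1.
apply: le_trans (_ : K * vnorm x <= K); last by rewrite -[leRHS]mulr1 ler_wpM2l.
rewrite /vnorm -(ger0_norm K_ge0) -sqrtr_sqr -sqrtrM ?sqr_ge0 // ler_sqrt; last first.
  by rewrite mulr_ge0 ?sqr_ge0 // sumr_ge0 // => i _; rewrite sqr_ge0.
rewrite mulr_sumr; apply: ler_sum => i _.
rewrite /diagf mul_diag_mx !mxE exprMn ler_wpM2r ?sqr_ge0 //.
by rewrite -[leLHS]ger0_norm ?sqr_ge0 // normrX lerXn2r ?nnegrE.
Qed.

End SpectralNorm.

Section DiagonalMatrices.
Variables (R : realType) (d : nat).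
Implicit Types (a b w : 'I_d -> R) (B C : 'M[R]_d).

Lemma diagf_mul a b : diagf a *m diagf b = diagf (fun i => a i * b i).
Proof. by rewrite /diagf mulmx_diag; congr diag_mx; apply/rowP => i; rewrite !mxE. Qed.

Lemma tr_diagf a : (diagf a)^T = diagf a.
Proof. exact: tr_diag_mx. Qed.

Lemma subr_scalar_diagf a : 1%:M - diagf a = diagf (fun i => 1 - a i).
Proof. by apply/matrixP => i j; rewrite !mxE; case: (i == j); rewrite ?subr0. Qed.

Lemma invmx_diagf w : (forall i, w i != 0) -> invmx (diagf w) = diagf (fun i => (w i)^-1).
Proof.
move=> w_neq0; have wV : diagf w *m diagf (fun i => (w i)^-1) = 1%:M.
  by apply/matrixP => i j; rewrite diagf_mul !mxE mulfV.
have [w_unit _] := mulmx1_unit wV.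
by rewrite -[invmx _]mulmx1 -wV mulKmx.
Qed.

Lemma frob_inner_diagfl w B : frob_inner (diagf w) B = \sum_i w i * B i i.
Proof.
by rewrite /frob_inner tr_diagf /mxtrace; apply: eq_bigr => i _; rewrite mul_diag_mx !mxE.
Qed.

Lemma diagf_quad_entry_ge w C j : (forall i, 0 <= w i) ->
  w j * C j j ^+ 2 <= (C^T *m diagf w *m C) j j.
Proof.
move=> w_ge0; rewrite mxE.
have -> : w j * C j j ^+ 2 = (C^T *m diagf w) j j * C j j.
  by rewrite mul_mx_diag !mxE; ring.
apply: ler_sum_term => k; rewrite mul_mx_diag !mxE mulrAC -expr2.
by rewrite mulr_ge0 ?sqr_ge0.
Qed.

Lemma frob_inner_diagf_quad w b a :
  frob_inner (diagf w) (diagf a *m diagf b *m (diagf a)^T)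
  = \sum_i w i * (b i * a i ^+ 2).
Proof.
rewrite frob_inner_diagfl tr_diagf !diagf_mul; apply: eq_bigr => i _.
by rewrite !mxE eqxx mulr1n mulrAC -expr2 (mulrC (a i ^+ 2)).
Qed.

End DiagonalMatrices.

Lemma diagf_conj_invsqrt (R : realType) (d : nat) (m v : 'I_d -> R) :
  (forall i, 0 < m i) ->
  diagf (fun i => (Num.sqrt (m i))^-1) *m diagf v *m diagf (fun i => (Num.sqrt (m i))^-1)
  = diagf (fun i => v i / m i).
Proof.
move=> m_gt0; rewrite !diagf_mul; congr diagf; apply/funext => i.
by rewrite mulrAC -invfM -expr2 (sqr_sqrtr (ltW (m_gt0 i))) mulrC.
Qed.

Section Shrinkage.
Variable R : realType.
Implicit Types (a u tau x : R).

Lemma shrink_lt1 tau x : 0 <= tau -> tau ^+ 2 < x -> tau / Num.sqrt x < 1.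
Proof.
move=> tau_ge0 tau_lt; have x_gt0 : 0 < x by apply: le_lt_trans tau_lt; rewrite sqr_ge0.
by rewrite ltr_pdivrMr ?sqrtr_gt0 // mul1r -(ger0_norm tau_ge0) -sqrtr_sqr ltr_sqrt.
Qed.

Lemma sqr_shrink_mul tau x : 0 < x -> (tau / Num.sqrt x) ^+ 2 * x = tau ^+ 2.
Proof. by move=> x_gt0; rewrite exprMn exprVn (sqr_sqrtr (ltW x_gt0)) mulfVK ?gt_eqF. Qed.

Lemma sqr_shrink_le a u : 0 <= u < 1 -> (1 - a) ^+ 2 <= u ^+ 2 -> (1 - u) ^+ 2 <= a ^+ 2.
Proof.
case/andP => u_ge0 u_lt1 a_sqr; have a_lb : 1 - a <= u.
  apply: le_trans (ler_norm _) _.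
  by rewrite -(ger0_norm u_ge0) -!sqrtr_sqr ler_sqrt ?sqr_ge0.
nra.
Qed.

Lemma quarter_le_sqr_shrink u : 2 * u < 1 -> 4^-1 <= (1 - u) ^+ 2.
Proof. by move=> u_lt; nra. Qed.

End Shrinkage.

Section DiagonalProblem.
Variables (R : realType) (d : nat) (k c : R) (rho s : 'I_d -> R).
Hypotheses (k_ge0 : 0 <= k) (c_ge0 : 0 <= c).
Hypotheses (rho_ge0 : forall i, 0 <= rho i) (s_ge0 : forall i, 0 <= s i).
Implicit Types (A : 'M[R]_d) (tau : R).

Definition diag_cost (A : 'M[R]_d) : R :=
  k * spec_norm ((1%:M - A)^T *m diagf rho *m (1%:M - A))
  + c * frob_inner (diagf rho) (A *m diagf s *m A^T).

Definition shrink_cost (tau : R) : R :=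
  k * tau ^+ 2
  + \sum_(i | tau ^+ 2 < rho i) c * rho i * s i * (1 - tau / Num.sqrt (rho i)) ^+ 2.

Definition threshold_cost (tau : R) : R :=
  k * tau ^+ 2 + \sum_(i | tau ^+ 2 < rho i) c * rho i * s i.

Definition shrinkage (tau : R) (i : 'I_d) : R :=
  if tau ^+ 2 < rho i then 1 - tau / Num.sqrt (rho i) else 0.

Lemma weight_ge0 i : 0 <= c * rho i * s i.
Proof. by rewrite !mulr_ge0. Qed.

Lemma diag_sum_le_frob_inner A :
  \sum_i rho i * (s i * A i i ^+ 2) <= frob_inner (diagf rho) (A *m diagf s *m A^T).
Proof.
rewrite frob_inner_diagfl; apply: ler_sum => i _; rewrite ler_wpM2l //.
by have := diagf_quad_entry_ge A^T i s_ge0; rewrite trmxK mxE.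
Qed.

Lemma diag_cost_ge0 A : 0 <= diag_cost A.
Proof.
rewrite addr_ge0 ?mulr_ge0 ?spec_norm_ge0 //.
apply: le_trans (diag_sum_le_frob_inner A).
by apply: sumr_ge0 => i _; rewrite mulr_ge0 // mulr_ge0 // sqr_ge0.
Qed.

Lemma shrink_cost_ge0 tau : 0 <= shrink_cost tau.
Proof.
apply: addr_ge0; first by rewrite mulr_ge0 ?sqr_ge0.
by apply: sumr_ge0 => i _; rewrite mulr_ge0 ?weight_ge0 ?sqr_ge0.
Qed.

Lemma threshold_cost_ge0 tau : 0 <= threshold_cost tau.
Proof.
apply: addr_ge0; first by rewrite mulr_ge0 ?sqr_ge0.
by apply: sumr_ge0 => i _; exact: weight_ge0.
Qed.

Lemma shrink_cost_le_diag_cost A :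
  shrink_cost (Num.sqrt (spec_norm ((1%:M - A)^T *m diagf rho *m (1%:M - A))))
  <= diag_cost A.
Proof.
set B := _ *m _ *m _; set tau := Num.sqrt _.
have tau_ge0 : 0 <= tau := sqrtr_ge0 _.
have tau2 : tau ^+ 2 = spec_norm B by rewrite sqr_sqrtr ?spec_norm_ge0.
rewrite /shrink_cost /diag_cost tau2 lerD2l.
apply: le_trans (ler_wpM2l c_ge0 (diag_sum_le_frob_inner A)).
rewrite mulr_sumr; apply: ler_sum_sub => [i tau_lt|i _]; last first.
  by rewrite mulr_ge0 // mulr_ge0 // mulr_ge0 // sqr_ge0.
split=> //; rewrite -tau2 in tau_lt.
have rho_gt0 : 0 < rho i by apply: le_lt_trans tau_lt; rewrite sqr_ge0.
have entry_le : rho i * (1 - A i i) ^+ 2 <= tau ^+ 2.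
  rewrite tau2; apply: le_trans (le_trans (ler_norm _) (normr_entry_le_spec_norm B i i)).
  by have := diagf_quad_entry_ge (1%:M - A) i rho_ge0; rewrite !mxE eqxx.
rewrite [leRHS]mulrA [leRHS]mulrA ler_wpM2l ?weight_ge0 // sqr_shrink_le //.
  by rewrite divr_ge0 ?sqrtr_ge0 ?shrink_lt1.
by rewrite -(ler_pM2r rho_gt0) sqr_shrink_mul // mulrC.
Qed.

Lemma diag_cost_shrinkage tau :
  0 <= tau -> diag_cost (diagf (shrinkage tau)) <= shrink_cost tau.
Proof.
move=> tau_ge0; rewrite /diag_cost /shrink_cost frob_inner_diagf_quad.
rewrite subr_scalar_diagf tr_diagf !diagf_mul; apply: lerD.
  rewrite ler_wpM2l // spec_norm_diagf_le ?sqr_ge0 // => i.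
  rewrite /shrinkage; case: ifP => [tau_lt | /negbT]; last first.
    by rewrite subr0 mulr1 mul1r ger0_norm // -leNgt.
  have rho_gt0 : 0 < rho i by apply: le_lt_trans tau_lt; rewrite sqr_ge0.
  by rewrite subKr mulrAC -expr2 sqr_shrink_mul // ger0_norm ?sqr_ge0.
rewrite mulr_sumr [leRHS]big_mkcond; apply: ler_sum => i _.
rewrite /shrinkage; case: ifP => _; last by rewrite expr0n /= !mulr0.
by rewrite !mulrA.
Qed.

Lemma threshold_cost_double_le tau :
  0 <= tau -> 4^-1 * threshold_cost (2 * tau) <= shrink_cost tau.
Proof.
move=> tau_ge0; rewrite /threshold_cost /shrink_cost mulrDr lerD //.
  by rewrite (_ : 4^-1 * _ = k * tau ^+ 2) //; field.
rewrite mulr_sumr; apply: ler_sum_sub => [i tau2_lt|i _]; last first.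
  by rewrite mulr_ge0 ?weight_ge0 ?sqr_ge0.
have tau_lt : tau ^+ 2 < rho i by apply: le_lt_trans tau2_lt; nra.
have rho_gt0 : 0 < rho i by apply: le_lt_trans tau_lt; rewrite sqr_ge0.
split=> //; rewrite mulrC ler_wpM2l ?weight_ge0 // quarter_le_sqr_shrink //.
by rewrite mulrA shrink_lt1 ?mulr_ge0 // exprMn.
Qed.

Lemma inf_diag_cost :
  inf (diag_cost @` setT) = inf (shrink_cost @` [set tau | 0 <= tau]).
Proof.
apply/le_anti/andP; split; rewrite -[X in X <= _]mul1r; apply: ler_inf_image => //.
- by exists 0 => _ [A _ <-]; exact: diag_cost_ge0.
- by exists (shrink_cost 0), 0 => /=.
- by move=> tau tau_ge0; exists (diagf (shrinkage tau)); rewrite ?mul1r ?diag_cost_shrinkage.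
- by exists 0 => _ [tau _ <-]; exact: shrink_cost_ge0.
- by exists (diag_cost 0), 0.
- move=> A _; exists (Num.sqrt (spec_norm ((1%:M - A)^T *m diagf rho *m (1%:M - A)))).
    exact: sqrtr_ge0.
  by rewrite mul1r shrink_cost_le_diag_cost.
Qed.

Lemma inf_threshold_cost_le :
  4^-1 * inf (threshold_cost @` [set tau | 0 <= tau])
  <= inf (shrink_cost @` [set tau | 0 <= tau]).
Proof.
apply: ler_inf_image => //.
- by exists 0 => _ [tau _ <-]; exact: threshold_cost_ge0.
- by exists (shrink_cost 0), 0 => /=.
- move=> tau tau_ge0; exists (2 * tau); first by rewrite /= mulr_ge0.
  exact: threshold_cost_double_le.
Qed.

End DiagonalProblem.

Unset Implicit Arguments. Set Strict Implicit.
Theorem mainTheorem6 (R : realType) (d : nat)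
  (lam m r : 'I_d -> R) (sigma : R) (n : nat)
  (hlam : forall i, 0 < lam i) (hm : forall i, 0 < m i)
  (hr : forall i, 0 <= r i) (hsigma : 0 < sigma) (hn : (1 <= n)%N) :
  let S := diagf lam in
  let M := diagf m in
  let Rm := diagf r in
  let Mih := diagf (fun i => (Num.sqrt (m i))^-1) in
  let R' := Mih *m Rm *m Mih in
  let S' := Mih *m S *m Mih in
  let lhs := inf [set (pi ^+ 2)^-1 * spec_norm ((1%:M - A)^T *m R' *m (1%:M - A))
                       + sigma ^+ 2 / n%:R * frob_inner R' (A *m invmx S' *m A^T)
                  | A in [set: 'M[R]_d]] in
  let mid := inf [set tau ^+ 2 / pi ^+ 2
                       + \sum_(i < d | r i / m i > tau ^+ 2)
                           (1 - tau * Num.sqrt (m i / r i)) ^+ 2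
                             * (sigma ^+ 2 * r i / (n%:R * lam i))
                  | tau in [set tau : R | 0 <= tau]] in
  let low := inf [set tau ^+ 2 / pi ^+ 2
                       + \sum_(i < d | r i / m i > tau ^+ 2)
                             sigma ^+ 2 * r i / (n%:R * lam i)
                  | tau in [set tau : R | 0 <= tau]] in
  lhs = mid /\ 4^-1 * low <= mid.
Proof.
move=> S M Rm Mih R' S' lhs mid low.
pose k := (pi ^+ 2)^-1 : R; pose c := sigma ^+ 2 / n%:R.
pose rho i := r i / m i; pose s i := m i / lam i.
have k_ge0 : 0 <= k by rewrite invr_ge0 sqr_ge0.
have c_ge0 : 0 <= c by rewrite divr_ge0 ?sqr_ge0.
have rho_ge0 i : 0 <= rho i by rewrite divr_ge0 // ltW.
have s_ge0 i : 0 <= s i by rewrite divr_ge0 // ltW.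
have weightE i : sigma ^+ 2 * r i / (n%:R * lam i) = c * rho i * s i.
  by rewrite /c /rho /s; field; rewrite pnatr_eq0 -lt0n hn !gt_eqF.
have lhsE : lhs = inf (diag_cost k c rho s @` setT).
  rewrite /lhs /R' /S' !diagf_conj_invsqrt // invmx_diagf => [|i]; last first.
    by rewrite gt_eqF ?divr_gt0.
  congr inf; apply: eq_imagel => A _; rewrite /diag_cost; congr (_ + _ * frob_inner _ _).
  by congr (_ *m _ *m _); congr diagf; apply/funext => i; rewrite invf_div.
have midE : mid = inf (shrink_cost k c rho s @` [set tau | 0 <= tau]).
  congr inf; apply: eq_imagel => tau _; rewrite /shrink_cost mulrC; congr (_ + _).
  by apply: eq_bigr => i _; rewrite weightE mulrC -invf_div (sqrtrV (rho_ge0 i)).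
have lowE : low = inf (threshold_cost k c rho s @` [set tau | 0 <= tau]).
  congr inf; apply: eq_imagel => tau _; rewrite /threshold_cost mulrC; congr (_ + _).
  exact: eq_bigr.
rewrite lhsE midE lowE; split; first exact: inf_diag_cost.
exact: inf_threshold_cost_le.
Qed.
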